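(* For every $w\in S_n$, the map $\Psi$ is a bijection from the set of chains from $w$ to $w_0$ compatible with $(n-1,\dots,1)$ to $\mathrm{FT}(w)$.
   Context: Permutations in one-line notation, $w_0=[n,\dots,1]$, $wt_{i,j}$ is $w$ with positions $i<j$ swapped, $\ell$ the number of inversions. $u\lessdot w$ iff $w=ut_{i,j}$, $i<j$, $\ell(w)=\ell(u)+1$; $u\lessdot_k w$ iff moreover $i\le k<j$. A $k$-chain is increasing if the smaller of the two values exchanged at each step strictly increases along the chain. $(w_1,\dots,w_d)$ is compatible with $(k_1,\dots,k_{d-1})$ if for each $s$ there is an increasing $k_s$-chain from $w_s$ to $w_{s+1}$ (unique when it exists). Flagged tableaux: staircase grid with a cell $(i,j)$ whenever $i+j\le n$, each cell of row $i$ empty or filled with an element of $[i]$. Reading word: scan rows top to bottom, each row right to left, writing $(i,n+1-c)$ for a cell in column $c$ filled with $i$. $T$ with reading word $(a_1,b_1),\dots,(a_d,b_d)$ is associated with $w$ if, with $v_0=w_0$ and $v_s=v_{s-1}t_{a_s,b_s}$, one has $v_s\lessdot v_{s-1}$ for all $s$ and $v_d=w$; $\mathrm{FT}(w)$ is the set of these. The map $\Psi$: let $C=(u_{n-1},\dots,u_0)$ be a chain from $u_{n-1}=w$ to $u_0=w_0$ compatible with $(n-1,\dots,1)$. For $k\in[n-1]$, write the increasing $k$-chain from $u_k$ to $u_{k-1}$ as $u_k=v_{d}\lessdot_k v_{d-1}\lessdot_k\cdots\lessdot_k v_0=u_{k-1}$ with $v_s=v_{s-1}t_{a_s,b_s}$,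 $a_s\le k<b_s$. Place the number $a_s$ in row $k$, column $n+1-b_s$, for each $s\in[d]$, leaving all other cells empty. The resulting flagged tableau is $\Psi(C)$. *)

From Stdlib Require Import ClassicalEpsilon.
From mathcomp Require Import all_boot.

Set Implicit Arguments.
Unset Strict Implicit.
Unset Printing Implicit Defensive.

(* Permutations of [n] in one-line notation: w = [:: w(1); ...; w(n)],
   a sequence of naturals that is a rearrangement of 1..n. *)
Definition is_perm (n : nat) (w : seq nat) : Prop := perm_eq w (iota 1 n).

Definition w0 (n : nat) : seq nat := rev (iota 1 n).

(* 1-based entry w(i) *)
Definition ent (w : seq nat) (i : nat) : nat := nth 0 w i.-1.

(* w t_{i,j}: w with positions i and j (1-based) swapped *)
Definition swap (w : seq nat) (i j : nat) : seq nat :=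
  [seq (if k == i then ent w j else if k == j then ent w i else ent w k)
  | k <- iota 1 (size w)].

Definition ninv (w : seq nat) : nat :=
  \sum_(p < size w) \sum_(q < size w | p < q) (nth 0 w q < nth 0 w p : nat).

Definition covers_by (u w : seq nat) (i j : nat) : Prop :=
  [/\ 1 <= i, i < j, j <= size u, w = swap u i j & ninv w = (ninv u).+1].

(* Increasing k-chain from u (bottom) to v (top), given by the list of
   transpositions (a,b) applied in order along the chain, starting at u.
   Each step x -> x t_{a,b} is a k-covering (a <= k < b), and the smaller
   exchanged value, which is x(a), strictly increases along the chain.
   [lo] is the previous smaller value (0 initially; all values are >= 1). *)
Fixpoint incr_kchain_aux (k : nat) (u v : seq nat) (lo : nat)
    (st : seq (nat * nat)) : Prop :=
  match st with
  | [::] => u = v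
  | (a, b) :: st' =>
      [/\ covers_by u (swap u a b) a b, a <= k < b, lo < ent u a
        & incr_kchain_aux k (swap u a b) v (ent u a) st']
  end.

Definition incr_kchain (k : nat) (u v : seq nat) (st : seq (nat * nat)) : Prop :=
  incr_kchain_aux k u v 0 st.

(* A chain C = (u_{n-1}, ..., u_0) is stored as the list
   [:: u_{n-1}; ...; u_0]; [uu n C k] is u_k. *)
Definition uu (n : nat) (C : seq (seq nat)) (k : nat) : seq nat :=
  nth [::] C (n.-1 - k).

Definition compat_chain (n : nat) (w : seq nat) (C : seq (seq nat)) : Prop :=
  [/\ size C = n, uu n C n.-1 = w, uu n C 0 = w0 n
    & forall k, 1 <= k <= n.-1 -> exists st, incr_kchain k (uu n C k) (uu n C k.-1) st].

(* Flagged tableaux: stored as the list of rows 1..n-1; row i is a list of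
   length n-i (columns 1..n-i), entry 0 = empty cell, otherwise an element of [i]. *)
Definition tableau := seq (seq nat).

Definition trow (T : tableau) (i : nat) : seq nat := nth [::] T i.-1.

Definition is_flagged (n : nat) (T : tableau) : Prop :=
  size T = n.-1 /\
  forall i, 1 <= i <= n.-1 ->
    size (trow T i) = n - i /\ all (fun x => x <= i) (trow T i).

(* Reading word: rows top to bottom, each row right to left; a cell in
   column c filled with a contributes (a, n+1-c). *)
Definition reading_word (n : nat) (T : tableau) : seq (nat * nat) :=
  flatten [seq [seq (nth 0 (trow T i) c.-1, n.+1 - c)
               | c <- rev (iota 1 (n - i)) & nth 0 (trow T i) c.-1 != 0]
          | i <- iota 1 n.-1].

Fixpoint assoc_from (v : seq nat) (word : seq (nat * nat)) (w : seq nat) : Prop :=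
  match word with
  | [::] => v = w
  | (a, b) :: word' => covers_by (swap v a b) v a b /\ assoc_from (swap v a b) word' w
  end.

Definition FT (n : nat) (w : seq nat) (T : tableau) : Prop :=
  is_flagged n T /\ assoc_from (w0 n) (reading_word n T) w.

(* The increasing k-chain from u_k to u_{k-1} (unique when it exists) *)
Definition kchain_steps (n : nat) (C : seq (seq nat)) (k : nat) : seq (nat * nat) :=
  epsilon (inhabits [::]) (fun st => incr_kchain k (uu n C k) (uu n C k.-1) st).

(* Row k of Psi(C): the cell in column c holds a_s if b_s = n+1-c for a step
   (a_s, b_s) of the increasing k-chain, and is empty (0) otherwise. *)
Definition Psi_row (n : nat) (C : seq (seq nat)) (k : nat) : seq nat :=
  let st := kchain_steps n C k in
  [seq nth 0 (map fst st) (index (n.+1 - c) (map snd st)) | c <- iota 1 (n - k)].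

Definition Psi (n : nat) (C : seq (seq nat)) : tableau :=
  [seq Psi_row n C k | k <- iota 1 n.-1].

From Stdlib Require Import ClassicalEpsilon.
From mathcomp Require Import all_boot perm zify.

Set Implicit Arguments.
Unset Strict Implicit.
Unset Printing Implicit Defensive.

(** Write u_k for the elements of a compatible chain. The invariant is that
   u_k is decreasing on the positions k+1..n: it holds for u_0 = w_0 and
   propagates upwards, because a k-covering x -> x t_{a,b} exchanges values
   x(a) < x(b) and no position strictly between a and b carries a value
   strictly between them (otherwise the length would jump by at least 3).
   Under the invariant, an increasing k-chain moves each position b > k at
   most once, in decreasing order of b, and the positions b > k it moves are
   exactly those where its two ends differ; so the chain is unique and row k
   of Psi, which records a at column n+1-b for each step (a, b), determines
   it. Read downwards, the same steps are downward coverings with increasing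
   b, i.e. row k read right to left; conversely every row of a tableau in
   FT(w), read that way, is such an increasing k-chain. This gives Psi C in
   FT(w), injectivity (the rows rebuild u_k from u_(k-1)), and surjectivity. *)

(* [lia] sees [@size nat s] and [@size T s], for [T] convertible to [nat]
   (e.g. [Equality.sort nat]), as different atoms; unify them first. *)
Ltac size_lia := repeat match goal with
  | |- context [@size ?T ?x] => progress change (@size T x) with (@size nat x)
  | H : context [@size ?T ?x] |- _ => progress change (@size T x) with (@size nat x) in H
  end; lia.

Definition transp (i j k : nat) : nat :=
  if k == i then j else if k == j then i else k.

Variant transp_spec i j k : nat -> Type :=
  | TranspFirst of k = i : transp_spec i j k j
  | TranspSecond of k = j & k != i : transp_spec i j k i
  | TranspNone of k != i & k != j : transp_spec i j k k.

Lemma transpP i j k : transp_spec i j k (transp i j k).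
Proof.
rewrite /transp; have [ki|ki] := eqVneq k i; first exact: TranspFirst.
by have [kj|kj] := eqVneq k j; [exact: TranspSecond | exact: TranspNone].
Qed.

Ltac case_transp :=
  repeat (let e := fresh "e" in case: transpP => [e|e ?|? ?]; rewrite ?e).

Lemma transpK i j : involutive (transp i j).
Proof.
move=> k; rewrite /transp.
have [->|ki] := eqVneq k i; first by rewrite eqxx; case: eqP => // _; rewrite eqxx.
have [<-|kj] := eqVneq k j; first by rewrite eqxx.
by rewrite (negPf ki) (negPf kj).
Qed.

Lemma transp_range n i j k : 1 <= i <= n -> 1 <= j <= n -> 1 <= k <= n ->
  1 <= transp i j k <= n.
Proof. by case_transp; lia. Qed.

Lemma size_swap u i j : size (swap u i j) = size u.
Proof. by rewrite size_map size_iota. Qed.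

Lemma swap_transp u i j :
  swap u i j = [seq ent u (transp i j k) | k <- iota 1 (size u)].
Proof. by rewrite /swap; apply: eq_map => k; rewrite /transp; case: ifP => //; case: ifP. Qed.

Lemma ent_swap u i j p : 1 <= p <= size u ->
  ent (swap u i j) p = ent u (transp i j p).
Proof.
move=> hp; rewrite swap_transp /ent (nth_map 0) ?size_iota; last by size_lia.
by rewrite nth_iota; [rewrite add1n prednK | ]; size_lia.
Qed.

Lemma ent_swapL u i j : 1 <= i <= size u -> ent (swap u i j) i = ent u j.
Proof. by move=> hi; rewrite ent_swap // /transp eqxx. Qed.

Lemma ent_swapR u i j : 1 <= j <= size u -> ent (swap u i j) j = ent u i.
Proof. by move=> hj; rewrite ent_swap // /transp eqxx; case: eqP => [->|]. Qed.

Lemma ent_swap_other u i j p : 1 <= p -> p != i -> p != j ->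
  ent (swap u i j) p = ent u p.
Proof.
move=> p1 pi pj; case: (leqP p (size u)) => hp.
  by rewrite ent_swap ?p1 ?hp // /transp (negPf pi) (negPf pj).
by rewrite /ent !nth_default ?size_swap; size_lia.
Qed.

Lemma eq_from_ent (u v : seq nat) : size u = size v ->
  (forall p, 1 <= p <= size u -> ent u p = ent v p) -> u = v.
Proof.
move=> hs h; apply: (eq_from_nth (x0 := 0)) => // q hq.
by have := h q.+1; apply; size_lia.
Qed.

Lemma swapK u i j : 1 <= i <= size u -> 1 <= j <= size u ->
  swap (swap u i j) i j = u.
Proof.
move=> hi hj; apply: eq_from_ent; rewrite !size_swap // => p hp.
by rewrite ent_swap ?size_swap // ent_swap ?transpK // transp_range.
Qed.

Lemma swap_id u i j : ent u i = ent u j -> swap u i j = u.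
Proof.
move=> e; apply: eq_from_ent; rewrite size_swap // => p hp.
by rewrite ent_swap // /transp; do ![case: eqP => [->|_]].
Qed.

Lemma mem_ent u p : 1 <= p <= size u -> ent u p \in u.
Proof. by move=> hp; rewrite mem_nth //; size_lia. Qed.

Lemma ent_inj u p q : uniq u -> 1 <= p <= size u -> 1 <= q <= size u ->
  ent u p = ent u q -> p = q.
Proof. by move=> U hp hq /eqP; rewrite /ent nth_uniq //; size_lia. Qed.

Definition uniq_pos n (u : seq nat) := [/\ size u = n, uniq u & 0 \notin u].

Lemma uniq_pos_swap n u i j : uniq_pos n u -> 1 <= i <= n -> 1 <= j <= n ->
  uniq_pos n (swap u i j).
Proof.
case=> su U u0 hi hj; rewrite swap_transp.
have tr k : k \in iota 1 (size u) -> 1 <= transp i j k <= size u.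
  by rewrite mem_iota => hk; apply: transp_range; size_lia.
split; first by rewrite size_map size_iota.
- rewrite map_inj_in_uniq ?iota_uniq // => p q hp hq.
  by move/(ent_inj U (tr _ hp) (tr _ hq))/(congr1 (transp i j)); rewrite !transpK.
- by apply/mapP => -[k hk e]; move: u0; rewrite e mem_ent ?tr.
Qed.

Lemma uniq_pos_ent_gt0 n u p : uniq_pos n u -> 1 <= p <= n -> 0 < ent u p.
Proof.
case=> su _ u0 hp; rewrite lt0n; apply: contraNneq u0 => <-.
by rewrite mem_ent ?su.
Qed.

Lemma val_tperm N (A B k : 'I_N) : val (tperm A B k) = transp A B k.
Proof.
rewrite /transp !val_eqE.
by case: tpermP => [->|->|/eqP/negPf-> /eqP/negPf->]; rewrite ?eqxx //; case: eqP => [->|].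
Qed.

Lemma sum_indicator (I : finType) (P : pred I) (a : I) :
  P a -> \sum_(x | P x) (x == a) = 1.
Proof. by move=> Pa; rewrite (bigD1 a) //= eqxx big1 // => x /andP[_ /negPf ->]. Qed.

Section PairTransposition.
Variables (N : nat) (A B : 'I_N).
Hypothesis ltAB : A < B.

(* Pairs not nested in [A, B] are transposed by [tperm A B]; this involution
   sends each such inversion of [u] to an inversion of [u t_(A,B)], so only
   the nested pairs need to be compared. *)
Definition pair_transp (x : 'I_N * 'I_N) : 'I_N * 'I_N :=
  if (x.1 < A) || (B < x.2) then (tperm A B x.1, tperm A B x.2) else x.

Lemma pair_transpK : involutive pair_transp.
Proof.
move=> [p q]; rewrite {2}/pair_transp /=; case: ifP => c; last by rewrite /pair_transp /= c.
rewrite /pair_transp /=; suff -> : (tperm A B p < A) || (B < tperm A B q) by rewrite !tpermK.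
by move: c; rewrite !val_tperm; case_transp; lia.
Qed.

Lemma pair_transp_lt x : ((pair_transp x).1 < (pair_transp x).2) = (x.1 < x.2).
Proof.
case: x => p q; rewrite /pair_transp /=; case: ifP => //= c.
by rewrite !val_tperm; apply/idP/idP; move: c; case_transp; lia.
Qed.

Lemma inversions_tperm_ge (u u' : seq nat) (C : 'I_N) (between : bool) :
  (forall k : 'I_N, nth 0 u' k = nth 0 u (tperm A B k)) ->
  nth 0 u A < nth 0 u B ->
  (between -> (A < C < B) && (nth 0 u A < nth 0 u C < nth 0 u B)) ->
  \sum_(x : 'I_N * 'I_N | x.1 < x.2) (nth 0 u x.2 < nth 0 u x.1) + 1 + 2 * between
  <= \sum_(x : 'I_N * 'I_N | x.1 < x.2) (nth 0 u' x.2 < nth 0 u' x.1).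
Proof.
move=> u'E uAB hC.
rewrite [X in _ <= X](reindex_inj (can_inj pair_transpK)).
rewrite [X in _ <= X](eq_bigl (fun x : 'I_N * 'I_N => x.1 < x.2)); last first.
  by move=> x; rewrite pair_transp_lt.
pose g x := (x == (A, B)) + between * ((x == (A, C)) + (x == (C, B))).
rewrite -addnA; have -> : 1 + 2 * between = \sum_(x : 'I_N * 'I_N | x.1 < x.2) g x.
  rewrite big_split /= sum_indicator // -big_distrr /=.
  case: (between) hC => [/(_ isT) /andP[/andP[AC CB] _]|_]; last by rewrite !mul0n.
  by rewrite big_split /= !sum_indicator.
rewrite -big_split /=; apply: leq_sum => -[p q] /= pq.
rewrite /g /pair_transp /= !xpair_eqE -!val_eqE /=; clear g.
case: ifP => c /=; rewrite !u'E ?tpermK.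
  by case: between hC => [/(_ isT) /andP[/andP[AC CB] _]|_]; lia.
rewrite !val_tperm; move: pq c.
case: between hC => [/(_ isT)|_]; last by case_transp; lia.
by case: (eqVneq (p : nat) C) => [->|?]; case: (eqVneq (q : nat) C) => [->|?]; case_transp; lia.
Qed.

End PairTransposition.

Lemma ninv_pairs N u : size u = N ->
  ninv u = \sum_(x : 'I_N * 'I_N | x.1 < x.2) (nth 0 u x.2 < nth 0 u x.1).
Proof. by move=> <-; rewrite /ninv pair_big_dep. Qed.

Lemma ninv_swap_ge u i j c (between : bool) : 1 <= i < j -> j <= size u ->
  ent u i < ent u j ->
  (between -> (i < c < j) && (ent u i < ent u c < ent u j)) ->
  ninv u + 1 + 2 * between <= ninv (swap u i j).
Proof.
move=> ij js uij hC.
have iN : i.-1 < size u by lia.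
have jN : j.-1 < size u by lia.
pose A := Ordinal iN; pose B := Ordinal jN; pose C := insubd A c.-1.
have swapE (k : 'I_(size u)) : nth 0 (swap u i j) k = nth 0 u (tperm A B k).
  rewrite -[nth 0 _ k]/(ent (swap u i j) k.+1) ent_swap; last by have := ltn_ord k; size_lia.
  by rewrite val_tperm /A /B /= /ent; congr nth; case_transp; lia.
have betweenC : between -> (A < C < B) && (nth 0 u A < nth 0 u C < nth 0 u B).
  case: between hC => // /(_ isT) /andP[cij uc] _.
  have cN : c.-1 < size u by lia.
  by rewrite /C /A /B val_insubd cN /=; move: cij uc; rewrite /ent; size_lia.
rewrite (ninv_pairs (erefl (size u))) (ninv_pairs (size_swap u i j)).
by apply: (inversions_tperm_ge _ swapE uij betweenC) => /=; lia.
Qed.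

Lemma covers_by_lt u i j : covers_by u (swap u i j) i j -> ent u i < ent u j.
Proof.
case=> i1 ij js _ hn; case: (ltngtP (ent u i) (ent u j)) => // h.
  have := @ninv_swap_ge (swap u i j) i j 0 false.
  by rewrite size_swap swapK ?ent_swapL ?ent_swapR ?i1 ?ij ?js ?h //=; lia.
by move: hn; rewrite swap_id //; lia.
Qed.

Lemma covers_by_gap u i j c : covers_by u (swap u i j) i j -> i < c < j ->
  ~~ (ent u i < ent u c < ent u j).
Proof.
move=> cov hc; apply/negP => uc; have uij := covers_by_lt cov.
case: cov => i1 ij js _ hn.
by have := @ninv_swap_ge u i j c true; rewrite i1 ij js uij hc uc hn /=; lia.
Qed.

Definition decreasing_after k (v : seq nat) :=
  forall p q, k < p -> p < q -> q <= size v -> ent v q < ent v p.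

Lemma decreasing_afterW k k' v :
  k <= k' -> decreasing_after k v -> decreasing_after k' v.
Proof. by move=> kk' dv p q kp; apply: dv; lia. Qed.

Lemma covers_decreasing_after k u a b : covers_by u (swap u a b) a b ->
  a <= k < b -> uniq u -> decreasing_after k (swap u a b) -> decreasing_after k u.
Proof.
move=> cov kab U ds; have uab := covers_by_lt cov; have [a1 ab bs _ _] := cov.
have sb : ent (swap u a b) b = ent u a by rewrite ent_swapR //; lia.
have sE x : k < x -> x != b -> ent (swap u a b) x = ent u x.
  by move=> kx xb; rewrite ent_swap_other //; lia.
move=> p q kp pq qs; have := ds p q kp pq; rewrite size_swap => /(_ qs).
have [epb|pb] := eqVneq p b; first by subst p; rewrite sb sE //; lia.
have [eqb|qb] := eqVneq q b; last by rewrite !sE //; lia.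
subst q.
rewrite sb sE // => uap; have abp : a < p < b by lia.
have := covers_by_gap cov abp; rewrite uap /= -leqNgt leq_eqVlt => /orP[/eqP ubp|//].
have bp : b = p by apply: (ent_inj U _ _ ubp); size_lia.
by rewrite bp eqxx in pb.
Qed.

Definition apply_word (v : seq nat) (s : seq (nat * nat)) : seq nat :=
  foldl (fun x p => swap x p.1 p.2) v s.

Lemma apply_word_cat v s1 s2 :
  apply_word v (s1 ++ s2) = apply_word (apply_word v s1) s2.
Proof. exact: foldl_cat. Qed.

Lemma assoc_from_apply v s w : assoc_from v s w -> w = apply_word v s.
Proof. by elim: s v => [|[a b] s IH] v /=; [move=> -> | case=> _ /IH]. Qed.

Lemma assoc_from_cat v s1 s2 w :
  assoc_from v (s1 ++ s2) w <-> exists m, assoc_from v s1 m /\ assoc_from m s2 w.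
Proof.
elim: s1 v => [|[a b] s IH] v /=; first by split => [h|[m [-> h]]] //; exists v.
split; first by case=> cov /IH [m [h1 h2]]; exists m.
by case=> m [[cov h1] h2]; split => //; apply/IH; exists m.
Qed.

Lemma assoc_from_cat_apply v s1 s2 w : assoc_from v (s1 ++ s2) w ->
  assoc_from v s1 (apply_word v s1) /\ assoc_from (apply_word v s1) s2 w.
Proof. by case/assoc_from_cat => m [h1 h2]; rewrite -(assoc_from_apply h1). Qed.

Lemma gtn_trans : transitive gtn.
Proof. by move=> y x z /= yx zy; apply: ltn_trans zy yx. Qed.

Lemma sorted_gtn_notin b s : sorted gtn (b :: s) -> b \notin s.
Proof. by move=> /(sorted_uniq gtn_trans (@ltnn)) /andP[]. Qed.

Section IncreasingChains.
Variable k : nat.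

Lemma incr_kchain_assoc u v lo st :
  incr_kchain_aux k u v lo st -> assoc_from v (rev st) u.
Proof.
elim: st u lo => [|[a b] st IH] u lo /=; first by move=> ->.
case=> cov _ _ /IH; rewrite rev_cons -cats1 => rest.
apply/assoc_from_cat; exists (swap u a b); split => //=.
by have [? ? ? _ _] := cov; rewrite swapK //; lia.
Qed.

Lemma incr_kchain_range u v lo st : incr_kchain_aux k u v lo st ->
  forall p, p \in st -> 1 <= p.1 <= k /\ k < p.2 <= size u.
Proof.
elim: st u lo => [|[a b] st IH] u lo //= [cov kab _ /IH rest] p.
rewrite in_cons size_swap in rest *; have [a1 ab bs _ _] := cov.
by case/orP => [/eqP -> /=|/rest //]; lia.
Qed.

Lemma incr_kchain_inv n u v lo st : incr_kchain_aux k u v lo st ->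
  uniq_pos n v -> decreasing_after k v -> uniq_pos n u /\ decreasing_after k u.
Proof.
elim: st u lo => [|[a b] st IH] u lo /=; first by move=> ->.
case=> cov kab _ rest gv dv; have [gs ds] := IH _ _ rest gv dv.
have [a1 ab bs _ _] := cov; have [sn _ _] := gs; rewrite size_swap in sn.
have gu : uniq_pos n u by rewrite -(@swapK u a b); [apply: (uniq_pos_swap gs) | |]; size_lia.
by split => //; apply: covers_decreasing_after cov kab _ ds; case: gu.
Qed.

Lemma incr_kchain_sorted n u v lo st : incr_kchain_aux k u v lo st ->
  uniq_pos n v -> decreasing_after k v -> sorted gtn (map snd st).
Proof.
elim: st u lo => [|[a b] st IH] u lo //= [cov kab _ rest] gv dv.
have [_ ds] := incr_kchain_inv rest gv dv.
have [a1 ab bs _ _] := cov; have sb : ent (swap u a b) b = ent u a by rewrite ent_swapR //; lia.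
case: st rest IH => [//|[a2 b2] st] /= [cov2 kab2 lo2 rest] IH.
rewrite (IH _ _ (And4 cov2 kab2 lo2 rest) gv dv) andbT.
have [_ _ bs2 _ _] := cov2; have lt2 := covers_by_lt cov2; rewrite size_swap in bs2.
case: (ltngtP b2 b) => // hb; last by subst b2; lia.
by have := ds b b2; rewrite size_swap; lia.
Qed.

(* The smaller value exchanged by the last step of a chain ending at [m]; that
   value sits in [m] at the larger position of the step. *)
Definition last_min (lo : nat) (st : seq (nat * nat)) (m : seq nat) : nat :=
  last lo [seq ent m p.2 | p <- st].

Lemma incr_kchain_rcons a b u m lo st : incr_kchain_aux k u m lo st ->
  covers_by m (swap m a b) a b -> a <= k < b -> last_min lo st m < ent m a ->
  incr_kchain_aux k u (swap m a b) lo (rcons st (a, b)).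
Proof.
elim: st u lo => [|[a1 b1] st IH] u lo /=; first by move=> ->.
case=> cov1 kab1 lo1 rest cov kab hlo; split => //; apply: IH => //.
rewrite /last_min in hlo *; case: st rest hlo => [|p st] //= <-.
by have [_ _ bs _ _] := cov1; rewrite ent_swapR //; lia.
Qed.

Lemma assoc_incr_kchain n seg v u : assoc_from v seg u ->
  uniq_pos n v -> decreasing_after k v ->
  (forall p, p \in seg -> p.1 <= k < p.2) -> sorted ltn (map snd seg) ->
  incr_kchain_aux k u v 0 (rev seg).
Proof.
elim: seg v => [|[a b] seg IH] v /=; first by move=> ->.
case=> cov rest gv dv hr so; set x := swap v a b in cov rest.
have [a1 ab bs vE _] := cov; have [sv _ _] := gv; rewrite size_swap in bs.
have kab : a <= k < b by apply: (hr (a, b)); rewrite mem_head.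
have gx : uniq_pos n x by apply: (uniq_pos_swap gv); size_lia.
have dx : decreasing_after k x.
  by apply: (covers_decreasing_after (a := a) (b := b)); rewrite -?vE //; case: gx.
have hr' p : p \in seg -> p.1 <= k < p.2 by move=> hp; apply: hr; rewrite in_cons hp orbT.
have := IH x rest gx dx hr' (path_sorted so).
rewrite rev_cons vE => ch; apply: incr_kchain_rcons; rewrite -?vE //.
case: seg {IH ch hr hr'} rest so => [_ _|[a2 b2] seg /= [cov2 _] /andP[bb2 _]].
  by apply: (uniq_pos_ent_gt0 gx); size_lia.
have [_ _ bs2 _ _] := cov2; rewrite !size_swap in bs2.
rewrite /last_min rev_cons map_rcons last_rcons /= ent_swapL ?ent_swap_other; try size_lia.
by apply: dv => //; size_lia.
Qed.

Lemma incr_kchain_fixed u v lo st : incr_kchain_aux k u v lo st ->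
  forall p, k < p -> p \notin map snd st -> ent v p = ent u p.
Proof.
elim: st u lo => [|[a b] st IH] u lo /=; first by move=> ->.
case=> cov kab _ rest p kp; rewrite in_cons negb_or => /andP[pb pst].
by rewrite (IH _ _ rest p kp pst) ent_swap_other //; lia.
Qed.

Lemma incr_kchain_moved n u v lo st : incr_kchain_aux k u v lo st ->
  uniq_pos n v -> decreasing_after k v ->
  forall p, k < p -> (p \in map snd st) = (ent u p != ent v p).
Proof.
elim: st u lo => [|[a b] st IH] u lo ch gv dv p kp; first by rewrite (ch : u = v) eqxx.
have bst := sorted_gtn_notin (incr_kchain_sorted ch gv dv).
case: ch => cov kab _ rest; rewrite /= in_cons (IH _ _ rest gv dv p kp).
have [a1 ab bs _ _] := cov; have uab := covers_by_lt cov.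
have [->|pb] := eqVneq p b.
  by rewrite (incr_kchain_fixed rest) //; [rewrite ent_swapR; lia | lia].
by rewrite ent_swap_other //; lia.
Qed.

Lemma incr_kchain_snd n u v lo1 lo2 st1 st2 :
  incr_kchain_aux k u v lo1 st1 -> incr_kchain_aux k u v lo2 st2 ->
  uniq_pos n v -> decreasing_after k v -> map snd st1 = map snd st2.
Proof.
move=> ch1 ch2 gv dv; apply: (irr_sorted_eq gtn_trans (@ltnn)).
- exact: incr_kchain_sorted ch1 gv dv.
- exact: incr_kchain_sorted ch2 gv dv.
have small st lo : incr_kchain_aux k u v lo st -> forall p, p <= k -> p \notin map snd st.
  move=> ch p pk; apply/negP => /mapP[q /(incr_kchain_range ch) [_ kq] pq].
  by move: kq; rewrite -pq; lia.
move=> p; case: (leqP p k) => [pk|kp].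
  by rewrite (negPf (small _ _ ch1 p pk)) (negPf (small _ _ ch2 p pk)).
by rewrite (incr_kchain_moved ch1 gv dv) // (incr_kchain_moved ch2 gv dv).
Qed.

Lemma incr_kchain_uniq n u v lo1 lo2 st1 st2 :
  incr_kchain_aux k u v lo1 st1 -> incr_kchain_aux k u v lo2 st2 ->
  uniq_pos n v -> decreasing_after k v -> st1 = st2.
Proof.
elim: st1 u lo1 lo2 st2 => [|[a b] st1 IH] u lo1 lo2 st2 ch1 ch2 gv dv;
  have := incr_kchain_snd ch1 ch2 gv dv;
  case: st2 ch2 => [|[a' b'] st2] ch2 //= [eb _]; subst b'.
have /= bst1 := sorted_gtn_notin (incr_kchain_sorted ch1 gv dv).
have /= bst2 := sorted_gtn_notin (incr_kchain_sorted ch2 gv dv).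
have [[_ U _] _] := incr_kchain_inv ch1 gv dv.
case: ch1 ch2 => [cov1 kab1 _ rest1] [cov2 kab2 _ rest2]; have kb : k < b by lia.
have [a1 ab bs _ _] := cov1; have [a1' ab' _ _ _] := cov2.
have := incr_kchain_fixed rest1 kb bst1; have := incr_kchain_fixed rest2 kb bst2.
rewrite !ent_swapR; try lia; move=> -> /(ent_inj U) ea.
have {}ea : a' = a by apply: ea; size_lia.
by subst a'; congr cons; apply: IH rest1 rest2 gv dv.
Qed.

End IncreasingChains.

Definition row_entry (st : seq (nat * nat)) (b : nat) : nat :=
  nth 0 (map fst st) (index b (map snd st)).

Definition row_of_steps n k (st : seq (nat * nat)) : seq nat :=
  [seq row_entry st (n.+1 - c) | c <- iota 1 (n - k)].

Definition read_row n k (r : seq nat) : seq (nat * nat) :=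
  [seq (nth 0 r c.-1, n.+1 - c) | c <- rev (iota 1 (n - k)) & nth 0 r c.-1 != 0].

Lemma Psi_rowE n C k : Psi_row n C k = row_of_steps n k (kchain_steps n C k).
Proof. by []. Qed.

Lemma reading_wordE n T :
  reading_word n T = flatten [seq read_row n i (trow T i) | i <- iota 1 n.-1].
Proof. by []. Qed.

Lemma row_entry_mem st p : uniq (map snd st) -> p \in st -> row_entry st p.2 = p.1.
Proof.
move=> U /(nthP (0, 0)) [i ist <-]; rewrite /row_entry.
by rewrite -(nth_map (0, 0) 0 snd ist) index_uniq ?size_map // (nth_map (0, 0)).
Qed.

Lemma row_entry_notin st b : b \notin map snd st -> row_entry st b = 0.
Proof. by move=> bst; rewrite /row_entry memNindex // nth_default // !size_map. Qed.

Lemma size_row_of_steps n k st : size (row_of_steps n k st) = n - k.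
Proof. by rewrite size_map size_iota. Qed.

Lemma row_of_steps_le n k st :
  (forall p, p \in st -> p.1 <= k) -> all (fun x => x <= k) (row_of_steps n k st).
Proof.
move=> hst; apply/allP => _ /mapP [c _ ->]; rewrite /row_entry.
case: (ltnP (index (n.+1 - c) (map snd st)) (size st)) => [ist|ist].
  by rewrite (nth_map (0, 0)) // hst // mem_nth.
by rewrite nth_default // size_map.
Qed.

Lemma rev_iota_sub n k : k <= n ->
  rev (iota 1 (n - k)) = map (fun b => n.+1 - b) (iota k.+1 (n - k)).
Proof.
move=> kn; apply: (eq_from_nth (x0 := 0)); first by rewrite size_rev size_map !size_iota.
rewrite size_rev size_iota => i hi.
by rewrite nth_rev ?size_iota // (nth_map 0) ?size_iota // !nth_iota; lia.
Qed.

Lemma read_row_pos n k r : k <= n -> read_row n k r =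
  [seq (nth 0 r (n - b), b) | b <- iota k.+1 (n - k) & nth 0 r (n - b) != 0].
Proof.
move=> kn; rewrite /read_row rev_iota_sub // filter_map -map_comp.
have cE b : b \in iota k.+1 (n - k) -> (n.+1 - b).-1 = n - b by rewrite mem_iota; lia.
rewrite (@eq_in_filter _ _ (fun b => nth 0 r (n - b) != 0)) => [|b /cE /= -> //].
apply/eq_in_map => b; rewrite mem_filter => /andP[_ /[dup] /cE /= ->].
by rewrite mem_iota => hb; congr pair; lia.
Qed.

Lemma map_snd_read_row n k r : k <= n ->
  map snd (read_row n k r) = [seq b <- iota k.+1 (n - k) | nth 0 r (n - b) != 0].
Proof. by move=> kn; rewrite read_row_pos // -map_comp map_id. Qed.

Lemma read_row_of_steps n k st : k <= n -> sorted gtn (map snd st) ->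
  (forall p, p \in st -> 1 <= p.1 /\ k < p.2 <= n) ->
  read_row n k (row_of_steps n k st) = rev st.
Proof.
move=> kn so hst; rewrite read_row_pos //.
have U : uniq (map snd st) by apply: sorted_uniq gtn_trans (@ltnn) _ so.
have rE b : b \in iota k.+1 (n - k) -> nth 0 (row_of_steps n k st) (n - b) = row_entry st b.
  rewrite mem_iota => hb; rewrite (nth_map 0) ?size_iota; last by lia.
  by rewrite nth_iota; [congr row_entry | ]; lia.
rewrite (@eq_in_filter _ _ (fun b => b \in map snd st)) => [|b hb]; last first.
  rewrite rE //; have [/mapP [p pst ->]|bst] := boolP (b \in map snd st).
    by rewrite row_entry_mem //; have := hst p pst; lia.
  by rewrite row_entry_notin.
have -> : [seq b <- iota k.+1 (n - k) | b \in map snd st] = map snd (rev st).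
  apply: (irr_sorted_eq ltn_trans (@ltnn)).
  - by apply: sorted_filter; [exact: ltn_trans | exact: iota_ltn_sorted].
  - by rewrite map_rev rev_sorted.
  move=> b; rewrite mem_filter map_rev mem_rev andb_idr // => /mapP [[x y] pst ->].
  by rewrite mem_iota; have /= := hst _ pst; lia.
rewrite -map_comp map_id_in // => -[x y]; rewrite mem_rev => pst /=.
rewrite rE ?(row_entry_mem U pst) // mem_iota; have /= := hst _ pst; lia.
Qed.

Lemma row_of_steps_read_row n k r : k <= n -> size r = n - k ->
  row_of_steps n k (rev (read_row n k r)) = r.
Proof.
move=> kn sr; set st := rev (read_row n k r).
have U : uniq (map snd st).
  by rewrite /st map_rev rev_uniq map_snd_read_row // filter_uniq // iota_uniq.
apply: (eq_from_nth (x0 := 0)); first by rewrite size_row_of_steps sr.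
rewrite size_row_of_steps => i hi; rewrite (nth_map 0) ?size_iota // nth_iota //.
have -> : n.+1 - (1 + i) = n - i by lia.
have ni : n - (n - i) = i by lia.
have [ri|ri] := eqVneq (nth 0 r i) 0.
  rewrite ri row_entry_notin // /st map_rev mem_rev map_snd_read_row // mem_filter ni ri.
  by rewrite eqxx.
have ist : (nth 0 r i, n - i) \in st.
  rewrite /st mem_rev read_row_pos //; apply/mapP; exists (n - i); last by rewrite ni.
  by rewrite mem_filter mem_iota ni ri /=; lia.
exact: row_entry_mem U ist.
Qed.

Lemma read_row_range n k r : k <= n -> size r = n - k -> all (fun x => x <= k) r ->
  forall p, p \in read_row n k r -> 1 <= p.1 <= k /\ k < p.2 <= n.
Proof.
move=> kn sr /allP rk p; rewrite read_row_pos // => /mapP [b].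
rewrite mem_filter mem_iota => /andP[nz hb] -> /=.
have : nth 0 r (n - b) <= k by apply: rk; rewrite mem_nth // sr; lia.
by move: nz; lia.
Qed.

Lemma read_row_sorted n k r : k <= n -> sorted ltn (map snd (read_row n k r)).
Proof.
move=> kn; rewrite map_snd_read_row //.
by apply: sorted_filter; [exact: ltn_trans | exact: iota_ltn_sorted].
Qed.

Lemma uniq_pos_w0 n : uniq_pos n (w0 n).
Proof. by split; rewrite ?size_rev ?size_iota ?rev_uniq ?iota_uniq ?mem_rev ?mem_iota. Qed.

Lemma decreasing_after_w0 n : decreasing_after 0 (w0 n).
Proof.
move=> p q p0 pq; rewrite size_rev size_iota => qn.
rewrite /ent /w0 !nth_rev ?size_iota; try lia.
by rewrite !nth_iota; lia.
Qed.

Lemma trow_map (f : nat -> seq nat) m i : 1 <= i <= m ->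
  trow [seq f k | k <- iota 1 m] i = f i.
Proof.
by move=> hi; rewrite /trow (nth_map 0) ?size_iota ?nth_iota; [congr f | | ]; lia.
Qed.

Lemma assoc_from_flatten (f : nat -> seq (nat * nat)) (u : nat -> seq nat) m k :
  (forall j, k < j <= k + m -> assoc_from (u j.-1) (f j) (u j)) ->
  assoc_from (u k) (flatten [seq f j | j <- iota k.+1 m]) (u (k + m)).
Proof.
elim: m k => [|m IH] k h /=; first by rewrite addn0.
apply/assoc_from_cat; exists (u k.+1); split; first by apply: (h k.+1); lia.
by rewrite -addSnnS; apply: IH => j hj; apply: h; lia.
Qed.

Section CompatibleChain.
Variables (n : nat) (w : seq nat) (C : seq (seq nat)).
Hypothesis chC : compat_chain n w C.

Lemma compat_chain_steps k : 1 <= k <= n.-1 ->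
  incr_kchain k (uu n C k) (uu n C k.-1) (kchain_steps n C k).
Proof. by case: chC => _ _ _ ex hk; apply: epsilon_spec; apply: ex. Qed.

Lemma compat_chain_inv k : k <= n.-1 ->
  uniq_pos n (uu n C k) /\ decreasing_after k (uu n C k).
Proof.
case: chC => _ _ bot _; elim: k => [|k IH] hk.
  by rewrite bot; split; [exact: uniq_pos_w0 | exact: decreasing_after_w0].
have [gk dk] := IH (ltnW hk); have hk' : 1 <= k.+1 <= n.-1 by lia.
exact: incr_kchain_inv (compat_chain_steps hk') gk (decreasing_afterW (leqnSn k) dk).
Qed.

Lemma compat_chain_row k : 1 <= k <= n.-1 ->
  read_row n k (trow (Psi n C) k) = rev (kchain_steps n C k).
Proof.
move=> hk; have ch := compat_chain_steps hk.
have hk1 : k.-1 <= n.-1 by lia.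
have [gv dv] := compat_chain_inv hk1.
have {}dv := decreasing_afterW (leq_pred k) dv.
have [[su _ _] _] := incr_kchain_inv ch gv dv.
rewrite /Psi trow_map; last by lia.
rewrite Psi_rowE read_row_of_steps //; first by lia.
  exact: incr_kchain_sorted ch gv dv.
by move=> p /(incr_kchain_range ch); rewrite su; lia.
Qed.

Lemma compat_chain_assoc k : 1 <= k <= n.-1 ->
  assoc_from (uu n C k.-1) (read_row n k (trow (Psi n C) k)) (uu n C k).
Proof.
by move=> hk; rewrite compat_chain_row //; apply: incr_kchain_assoc (compat_chain_steps hk).
Qed.

End CompatibleChain.

Lemma Psi_FT n w C : compat_chain n w C -> FT n w (Psi n C).
Proof.
move=> chC; have [sC top bot _] := chC; split.
  split; first by rewrite size_map size_iota.
  move=> i hi; rewrite /Psi trow_map // Psi_rowE size_row_of_steps; split => //.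
  by apply: row_of_steps_le => -[x y] /(incr_kchain_range (compat_chain_steps chC hi)) /=; lia.
rewrite reading_wordE -bot -top -(add0n n.-1).
by apply: assoc_from_flatten => j hj; apply: (compat_chain_assoc chC); lia.
Qed.

Lemma Psi_inj n w C1 C2 : compat_chain n w C1 -> compat_chain n w C2 ->
  Psi n C1 = Psi n C2 -> C1 = C2.
Proof.
move=> ch1 ch2 ePsi; have [s1 _ b1 _] := ch1; have [s2 _ b2 _] := ch2.
have uuE k : k <= n.-1 -> uu n C1 k = uu n C2 k.
  elim: k => [|k IH] hk; first by rewrite b1 b2.
  have hk' : 1 <= k.+1 <= n.-1 by lia.
  rewrite (assoc_from_apply (compat_chain_assoc ch1 hk')).
  by rewrite (assoc_from_apply (compat_chain_assoc ch2 hk')) /= IH ?ePsi //; lia.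
apply: (eq_from_nth (x0 := [::])); rewrite s1 ?s2 // => i hi.
by have := uuE (n.-1 - i); rewrite /uu subKn; [apply | ]; lia.
Qed.

Section Surjectivity.
Variables (n : nat) (w : seq nat) (T : tableau).
Hypotheses (n_gt0 : 0 < n) (hT : FT n w T).

Let row i := read_row n i (trow T i).

(* [chain_elt k] is u_k: the image of [w_0] under the reading word of rows [1..k]. *)
Definition chain_elt k := apply_word (w0 n) (flatten [seq row i | i <- iota 1 k]).

Lemma chain_eltS k : chain_elt k.+1 = apply_word (chain_elt k) (row k.+1).
Proof.
have iotaS : iota 1 k.+1 = iota 1 k ++ [:: k.+1] by have := iotaD 1 k 1; rewrite addn1 add1n.
by rewrite /chain_elt iotaS map_cat flatten_cat apply_word_cat /= cats0.
Qed.

Lemma row_range k : 1 <= k <= n.-1 ->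
  forall p, p \in row k -> p.1 <= k < p.2.
Proof.
case: hT => -[_ rows] _ hk; have [sr ar] := rows k hk.
by move=> -[x y] /(read_row_range _ sr ar) /=; lia.
Qed.

Lemma chain_elt_assoc k : k <= n.-1 ->
  assoc_from (chain_elt k) (flatten [seq row i | i <- iota k.+1 (n.-1 - k)]) w.
Proof.
elim: k => [|k IH] hk; first by case: hT => _; rewrite subn0.
have := IH (ltnW hk); rewrite (_ : n.-1 - k = (n.-1 - k.+1).+1) /=; last by lia.
by case/assoc_from_cat_apply => _; rewrite -chain_eltS.
Qed.

Lemma chain_elt_assoc_row k : k < n.-1 ->
  assoc_from (chain_elt k) (row k.+1) (chain_elt k.+1).
Proof.
move=> hk; have := chain_elt_assoc (ltnW hk).
rewrite (_ : n.-1 - k = (n.-1 - k.+1).+1) /=; last by lia.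
by case/assoc_from_cat_apply; rewrite -chain_eltS.
Qed.

Lemma chain_elt_kchainS k : k < n.-1 ->
  uniq_pos n (chain_elt k) -> decreasing_after k (chain_elt k) ->
  incr_kchain k.+1 (chain_elt k.+1) (chain_elt k) (rev (row k.+1)).
Proof.
move=> hk g d; have hk' : 1 <= k.+1 <= n.-1 by lia.
apply: (assoc_incr_kchain (chain_elt_assoc_row hk) g (decreasing_afterW (leqnSn k) d)).
  exact: row_range.
by apply: read_row_sorted; lia.
Qed.

Lemma chain_elt_inv k : k <= n.-1 ->
  uniq_pos n (chain_elt k) /\ decreasing_after k (chain_elt k).
Proof.
elim: k => [|k IH] hk; first by split; [exact: uniq_pos_w0 | exact: decreasing_after_w0].
have [g d] := IH (ltnW hk).
exact: incr_kchain_inv (chain_elt_kchainS hk g d) g (decreasing_afterW (leqnSn k) d).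
Qed.

Lemma chain_elt_kchain k : 1 <= k <= n.-1 ->
  incr_kchain k (chain_elt k) (chain_elt k.-1) (rev (row k)).
Proof.
move=> hk; have hk' : k.-1 < n.-1 by lia.
have [g d] := chain_elt_inv (ltnW hk').
by have := chain_elt_kchainS hk' g d; rewrite prednK //; lia.
Qed.

Definition chain_of_tableau := [seq chain_elt (n.-1 - j) | j <- iota 0 n].

Lemma uu_chain_of_tableau k : k <= n.-1 -> uu n chain_of_tableau k = chain_elt k.
Proof.
move=> hk; rewrite /uu (nth_map 0) ?size_iota ?nth_iota; try lia.
by rewrite add0n subKn.
Qed.

Lemma compat_chain_of_tableau : compat_chain n w chain_of_tableau.
Proof.
split; first by rewrite size_map size_iota.
- by have := chain_elt_assoc (leqnn _); rewrite uu_chain_of_tableau // subnn.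
- by rewrite uu_chain_of_tableau.
move=> k hk; exists (rev (row k)).
by rewrite !uu_chain_of_tableau; [exact: chain_elt_kchain | lia | lia].
Qed.

Lemma Psi_chain_of_tableau : Psi n chain_of_tableau = T.
Proof.
case: hT => -[sT rows] _; apply: (eq_from_nth (x0 := [::])); first by rewrite size_map size_iota.
rewrite size_map size_iota => i hi; have hk : 1 <= i.+1 <= n.-1 by lia.
change (trow (Psi n chain_of_tableau) i.+1 = trow T i.+1).
rewrite /Psi trow_map // Psi_rowE.
have ch := compat_chain_steps compat_chain_of_tableau hk.
have [g d] := chain_elt_inv (ltnW hk).
rewrite !uu_chain_of_tableau /= in ch; try lia.
rewrite (incr_kchain_uniq ch (chain_elt_kchain hk) g (decreasing_afterW (leqnSn i) d)).
by rewrite row_of_steps_read_row; [ | lia | case: (rows _ hk)].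
Qed.

End Surjectivity.

Theorem lemma4p12 (n : nat) (w : seq nat) :
  0 < n -> is_perm n w ->
  [/\ (forall C, compat_chain n w C -> FT n w (Psi n C)),
      (forall C1 C2, compat_chain n w C1 -> compat_chain n w C2 ->
         Psi n C1 = Psi n C2 -> C1 = C2)
    & (forall T, FT n w T -> exists C, compat_chain n w C /\ Psi n C = T)].
Proof.
move=> n_gt0 _; split; [exact: Psi_FT | exact: Psi_inj |].
move=> T hT; exists (chain_of_tableau n T).
by split; [exact: compat_chain_of_tableau | exact: Psi_chain_of_tableau n_gt0 hT].
Qed.
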